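(* Let $R_0$ be a commutative Noetherian ring in which $2$ is a unit. Let $R_0[\mathbb Q]=R_0[a_{ij},\ell_{ij}\ (1\le i\le 2,1\le j\le 3),\psi_{12},\psi_{13},\psi_{23},z_1,z_2]$ be a polynomial ring in these $17$ indeterminates and let $\mathbb Q$ be the complex over $R_0[\mathbb Q]$ described below. Let $R_0[\mathbb M]=R_0[x_{ij},y_{ij}\ (1\le i<j\le 4),\ z_{ijk}\ (1\le i<j<k\le 4),\ t]$ be a polynomial ring in these $17$ indeterminates and let $\mathbb M$ be the complex over $R_0[\mathbb M]$ described below. Then there is a surjective $R_0$-algebra homomorphism $\mu:R_0[\mathbb Q]\to R_0[\mathbb M]$ such that the complexes $\mathbb Q\otimes_{R_0[\mathbb Q]}R_0[\mathbb M]$ and $\mathbb M$ are isomorphic.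
   Context: The complex $\mathbb Q$: $0\to R^2\xrightarrow{q_3}R^6\xrightarrow{q_2}R^5\xrightarrow{q_1}R$ (with $R=R_0[\mathbb Q]$). Write $A=(a_{ij})$, $L=(\ell_{ij})$ ($2\times 3$), $P=(\psi_{23},-\psi_{13},\psi_{12})^{\rm T}$, $N=\sum_{i=1}^3(a_{1i}\ell_{2i}-a_{2i}\ell_{1i})$. $q_1=[g_1\ g_2\ g_3\ g_4\ g_5]$ with $g_1=-\det\begin{bmatrix}\psi_{23}&-\psi_{13}&\psi_{12}\\ \ell_{11}&\ell_{12}&\ell_{13}\\ \ell_{21}&\ell_{22}&\ell_{23}\end{bmatrix}-z_2N-z_2z_1$, $g_2=P^{\rm T}A^{\rm T}\begin{bmatrix}\ell_{21}\\-\ell_{11}\end{bmatrix}-z_2(a_{12}a_{23}-a_{13}a_{22})+z_1\psi_{23}$, $g_3=P^{\rm T}A^{\rm T}\begin{bmatrix}\ell_{22}\\-\ell_{12}\end{bmatrix}+z_2(a_{11}a_{23}-a_{13}a_{21})-z_1\psi_{13}$, $g_4=P^{\rm T}A^{\rm T}\begin{bmatrix}\ell_{23}\\-\ell_{13}\end{bmatrix}-z_2(a_{11}a_{22}-a_{12}a_{21})+z_1\psi_{12}$, $g_5=-\det(AL^{\rm T})-z_1N-z_1^2$. $q_2$ ($5\times6$) has columns (rows 1 to 5): $C_1=(\psi_{12}a_{23}-\psi_{13}a_{22}+\psi_{23}a_{21},\ -\ell_{22}\psi_{12}-\ell_{23}\psi_{13}+z_2a_{21},\ \ell_{21}\psi_{12}-\ell_{23}\psi_{23}+z_2a_{22},\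 \ell_{21}\psi_{13}+\ell_{22}\psi_{23}+z_2a_{23},\ 0)$; $C_2=(-\psi_{12}a_{13}+\psi_{13}a_{12}-\psi_{23}a_{11},\ \psi_{12}\ell_{12}+\psi_{13}\ell_{13}-z_2a_{11},\ -\psi_{12}\ell_{11}+\psi_{23}\ell_{13}-z_2a_{12},\ -\psi_{13}\ell_{11}-\psi_{23}\ell_{12}-z_2a_{13},\ 0)$; $C_3=(z_1,\ \ell_{12}\ell_{23}-\ell_{13}\ell_{22},\ -(\ell_{11}\ell_{23}-\ell_{13}\ell_{21}),\ \ell_{11}\ell_{22}-\ell_{12}\ell_{21},\ -z_2)$; $C_4=(a_{12}a_{23}-a_{13}a_{22},\ -(a_{12}\ell_{22}-a_{22}\ell_{12})-(a_{13}\ell_{23}-a_{23}\ell_{13})-z_1,\ a_{12}\ell_{21}-a_{22}\ell_{11},\ a_{13}\ell_{21}-a_{23}\ell_{11},\ -\psi_{23})$; $C_5=(-(a_{11}a_{23}-a_{13}a_{21}),\ a_{11}\ell_{22}-a_{21}\ell_{12},\ -(a_{11}\ell_{21}-a_{21}\ell_{11})-(a_{13}\ell_{23}-a_{23}\ell_{13})-z_1,\ a_{13}\ell_{22}-a_{23}\ell_{12},\ \psi_{13})$; $C_6=(a_{11}a_{22}-a_{12}a_{21},\ a_{11}\ell_{23}-a_{21}\ell_{13},\ a_{12}\ell_{23}-a_{22}\ell_{13},\ -(a_{11}\ell_{21}-a_{21}\ell_{11})-(a_{12}\ell_{22}-a_{22}\ell_{12})-z_1,\ -\psi_{12})$. $q_3$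 ($6\times2$), rows (column 1; column 2): $(a_{11}\ell_{11}+a_{12}\ell_{12}+a_{13}\ell_{13};\ a_{11}\ell_{21}+a_{12}\ell_{22}+a_{13}\ell_{23}+z_1)$, $(a_{21}\ell_{11}+a_{22}\ell_{12}+a_{23}\ell_{13}-z_1;\ a_{21}\ell_{21}+a_{22}\ell_{22}+a_{23}\ell_{23})$, $(-a_{11}\psi_{23}+a_{12}\psi_{13}-a_{13}\psi_{12};\ -a_{21}\psi_{23}+a_{22}\psi_{13}-a_{23}\psi_{12})$, $(-\ell_{12}\psi_{12}-\ell_{13}\psi_{13}+z_2a_{11};\ -\ell_{22}\psi_{12}-\ell_{23}\psi_{13}+z_2a_{21})$, $(\ell_{11}\psi_{12}-\ell_{13}\psi_{23}+z_2a_{12};\ \ell_{21}\psi_{12}-\ell_{23}\psi_{23}+z_2a_{22})$, $(\ell_{11}\psi_{13}+\ell_{12}\psi_{23}+z_2a_{13};\ \ell_{21}\psi_{13}+\ell_{22}\psi_{23}+z_2a_{23})$. The complex $\mathbb M$: $0\to R^2\xrightarrow{m_3}R^6\xrightarrow{m_2}R^5\xrightarrow{m_1}R$ (with $R=R_0[\mathbb M]$). Put $D(ij,kl)=x_{ij}y_{kl}-x_{kl}y_{ij}$, $a=x_{12}x_{34}-x_{13}x_{24}+x_{14}x_{23}$, $b=x_{12}y_{34}-x_{13}y_{24}+x_{14}y_{23}+y_{12}x_{34}-y_{13}x_{24}+y_{14}x_{23}$, $c=y_{12}y_{34}-y_{13}y_{24}+y_{14}y_{23}$, $u=b^2-4ac$,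 $u_{123}=-2z_{234}D(12,13)+2z_{134}D(12,23)-2z_{124}D(13,23)+z_{123}(D(13,24)-D(12,34)+D(14,23))$, $u_{124}=2z_{234}D(12,14)-2z_{134}D(12,24)+z_{124}(D(12,34)+D(13,24)+D(14,23))-2z_{123}D(14,24)$, $u_{134}=2z_{234}D(13,14)+z_{134}(-D(12,34)-D(13,24)+D(14,23))+2z_{124}D(13,34)-2z_{123}D(14,34)$, $u_{234}=z_{234}(-D(12,34)+D(13,24)-D(14,23))-2z_{134}D(23,24)+2z_{124}D(23,34)-2z_{123}D(24,34)$. $m_1=[-u_{234}+tz_{234},\ -u_{134}+tz_{134},\ -u_{124}+tz_{124},\ -u_{123}-tz_{123},\ -u+t^2]$. $m_2$ ($5\times 6$) has columns (rows 1 to 5): $(-y_{12}z_{134}+y_{13}z_{124}-y_{14}z_{123},\ y_{12}z_{234}-y_{23}z_{124}+y_{24}z_{123},\ -y_{13}z_{234}+y_{23}z_{134}-y_{34}z_{123},\ -y_{14}z_{234}+y_{24}z_{134}-y_{34}z_{124},\ 0)$; $(-x_{12}z_{134}+x_{13}z_{124}-x_{14}z_{123},\ x_{12}z_{234}-x_{23}z_{124}+x_{24}z_{123},\ -x_{13}z_{234}+x_{23}z_{134}-x_{34}z_{123},\ -x_{14}z_{234}+x_{24}z_{134}-x_{34}z_{124},\ 0)$; $(-x_{12}y_{34}+x_{34}y_{12}+x_{13}y_{24}-x_{24}y_{13}-x_{14}y_{23}+x_{23}y_{14}+t,\ -2(x_{23}y_{24}-x_{24}y_{23}),\ 2(x_{23}y_{34}-x_{34}y_{23}),\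 2(x_{24}y_{34}-x_{34}y_{24}),\ -z_{234})$; $(2(x_{13}y_{14}-x_{14}y_{13}),\ -x_{12}y_{34}+x_{34}y_{12}-x_{13}y_{24}+x_{24}y_{13}+x_{14}y_{23}-x_{23}y_{14}+t,\ 2(x_{13}y_{34}-x_{34}y_{13}),\ 2(x_{14}y_{34}-x_{34}y_{14}),\ -z_{134})$; $(-2(x_{12}y_{14}-x_{14}y_{12}),\ 2(x_{12}y_{24}-x_{24}y_{12}),\ -x_{12}y_{34}+x_{34}y_{12}-x_{13}y_{24}+x_{24}y_{13}-x_{14}y_{23}+x_{23}y_{14}-t,\ -2(x_{14}y_{24}-x_{24}y_{14}),\ z_{124})$; $(-2(x_{12}y_{13}-x_{13}y_{12}),\ 2(x_{12}y_{23}-x_{23}y_{12}),\ -2(x_{13}y_{23}-x_{23}y_{13}),\ x_{12}y_{34}-x_{34}y_{12}-x_{13}y_{24}+x_{24}y_{13}-x_{14}y_{23}+x_{23}y_{14}+t,\ z_{123})$. $m_3$ ($6\times2$), rows (column 1; column 2): $(x_{12}y_{34}-x_{13}y_{24}+x_{14}y_{23}+x_{34}y_{12}-x_{24}y_{13}+x_{23}y_{14}+t;\ 2(x_{12}x_{34}-x_{13}x_{24}+x_{14}x_{23}))$, $(-2(y_{12}y_{34}-y_{13}y_{24}+y_{14}y_{23});\ -x_{12}y_{34}+x_{13}y_{24}-x_{14}y_{23}-x_{34}y_{12}+x_{24}y_{13}-x_{23}y_{14}+t)$, $(-(-y_{12}z_{134}+y_{13}z_{124}-y_{14}z_{123});\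 -(-x_{12}z_{134}+x_{13}z_{124}-x_{14}z_{123}))$, $(-y_{12}z_{234}+y_{23}z_{124}-y_{24}z_{123};\ -x_{12}z_{234}+x_{23}z_{124}-x_{24}z_{123})$, $(-y_{13}z_{234}+y_{23}z_{134}-y_{34}z_{123};\ -x_{13}z_{234}+x_{23}z_{134}-x_{34}z_{123})$, $(-(-y_{14}z_{234}+y_{24}z_{134}-y_{34}z_{124});\ -(-x_{14}z_{234}+x_{24}z_{134}-x_{34}z_{124}))$. An isomorphism of complexes means a family of isomorphisms of the modules in each degree commuting with the differentials. *)

From HB Require Import structures.
From mathcomp Require Import all_boot all_algebra.
From mathcomp Require Import mpoly.

Set Implicit Arguments.
Unset Strict Implicit.
Unset Printing Implicit Defensive.

Import GRing.Theory.
Local Open Scope ring_scope.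

Definition is_ideal (R : comNzRingType) (I : R -> Prop) : Prop :=
  [/\ I 0, (forall x y, I x -> I y -> I (x + y)) & (forall r x, I x -> I (r * x))].

Definition noetherian (R : comNzRingType) : Prop :=
  forall I : R -> Prop, is_ideal I ->
    exists s : seq R, forall x, I x <->
      exists c : 'I_(size s) -> R, x = \sum_(i < size s) c i * s`_i.

Definition is_alg_hom (R : comNzRingType) (n m : nat)
    (f : {mpoly R[n]} -> {mpoly R[m]}) : Prop :=
  [/\ forall p q, f (p + q) = f p + f q,
      forall p q, f (p * q) = f p * f q,
      f 1 = 1 &
      forall c : R, f c%:MP = c%:MP].

Definition mx_invertible (R : comNzRingType) (n : nat) (A : 'M[R]_n) : Prop :=
  exists B : 'M[R]_n, A *m B = 1%:M /\ B *m A = 1%:M.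

(* Two complexes 0 -> R^2 -d3-> R^6 -d2-> R^5 -d1-> R (maps acting on column
   vectors, d_i given by its matrix) are isomorphic: there are isomorphisms in
   each degree commuting with the differentials. *)
Definition cx_iso (R : comNzRingType)
    (d1 : 'M[R]_(1,5)) (d2 : 'M[R]_(5,6)) (d3 : 'M[R]_(6,2))
    (e1 : 'M[R]_(1,5)) (e2 : 'M[R]_(5,6)) (e3 : 'M[R]_(6,2)) : Prop :=
  exists (f0 : 'M[R]_1) (f1 : 'M[R]_5) (f2 : 'M[R]_6) (f3 : 'M[R]_2),
    [/\ mx_invertible f0, mx_invertible f1, mx_invertible f2, mx_invertible f3 &
    [/\ f0 *m d1 = e1 *m f1, f1 *m d2 = e2 *m f2 & f2 *m d3 = e3 *m f3]].

Definition mxs (R : comNzRingType) (m n : nat) (s : seq (seq R)) : 'M[R]_(m, n) :=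
  \matrix_(i < m, j < n) (nth [::] s i)`_j.

Section Complexes.
Variable R : comNzRingType.
Local Notation P := {mpoly R[17]}.

(* Variables of R0[Q], indexed 0..16: a_ij, l_ij (= ell_ij), p_ij (= psi_ij), z1, z2 *)

Definition a11 : P := 'X_(inord 0).
Definition a12 : P := 'X_(inord 1).
Definition a13 : P := 'X_(inord 2).
Definition a21 : P := 'X_(inord 3).
Definition a22 : P := 'X_(inord 4).
Definition a23 : P := 'X_(inord 5).
Definition l11 : P := 'X_(inord 6).
Definition l12 : P := 'X_(inord 7).
Definition l13 : P := 'X_(inord 8).
Definition l21 : P := 'X_(inord 9).
Definition l22 : P := 'X_(inord 10).
Definition l23 : P := 'X_(inord 11).
Definition p12 : P := 'X_(inord 12).
Definition p13 : P := 'X_(inord 13).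
Definition p23 : P := 'X_(inord 14).
Definition z1 : P := 'X_(inord 15).
Definition z2 : P := 'X_(inord 16).

(* Variables of R0[M], indexed 0..16: x_ij, y_ij, z_ijk, t *)
Definition x12 : P := 'X_(inord 0).
Definition x13 : P := 'X_(inord 1).
Definition x14 : P := 'X_(inord 2).
Definition x23 : P := 'X_(inord 3).
Definition x24 : P := 'X_(inord 4).
Definition x34 : P := 'X_(inord 5).
Definition y12 : P := 'X_(inord 6).
Definition y13 : P := 'X_(inord 7).
Definition y14 : P := 'X_(inord 8).
Definition y23 : P := 'X_(inord 9).
Definition y24 : P := 'X_(inord 10).
Definition y34 : P := 'X_(inord 11).
Definition z123 : P := 'X_(inord 12).
Definition z124 : P := 'X_(inord 13).
Definition z134 : P := 'X_(inord 14).
Definition z234 : P := 'X_(inord 15).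
Definition t : P := 'X_(inord 16).

Definition NQ : P := (a11*l21 - a21*l11 + a12*l22 - a22*l12 + a13*l23 - a23*l13).

Definition Qd1 : 'M[P]_(1,5) := mxs 1 5
  [:: [:: -(p23*(l12*l23 - l13*l22) + p13*(l11*l23 - l13*l21) + p12*(l11*l22 - l12*l21)) - z2*NQ - z2*z1; p23*(a11*l21 - a21*l11) - p13*(a12*l21 - a22*l11) + p12*(a13*l21 - a23*l11) - z2*(a12*a23 - a13*a22) + z1*p23; p23*(a11*l22 - a21*l12) - p13*(a12*l22 - a22*l12) + p12*(a13*l22 - a23*l12) + z2*(a11*a23 - a13*a21) - z1*p13; p23*(a11*l23 - a21*l13) - p13*(a12*l23 - a22*l13) + p12*(a13*l23 - a23*l13) - z2*(a11*a22 - a12*a21) + z1*p12; -((a11*l11 + a12*l12 + a13*l13)*(a21*l21 + a22*l22 + a23*l23) - (a11*l21 + a12*l22 + a13*l23)*(a21*l11 + a22*l12 + a23*l13)) - z1*NQ - z1*z1]].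
(* q2 given by its columns C1..C6 *)
Definition Qd2 : 'M[P]_(5,6) := (mxs 6 5
  [:: [:: p12*a23 - p13*a22 + p23*a21; -l22*p12 - l23*p13 + z2*a21; l21*p12 - l23*p23 + z2*a22; l21*p13 + l22*p23 + z2*a23; 0];
   [:: -p12*a13 + p13*a12 - p23*a11; p12*l12 + p13*l13 - z2*a11; -p12*l11 + p23*l13 - z2*a12; -p13*l11 - p23*l12 - z2*a13; 0];
   [:: z1; l12*l23 - l13*l22; -(l11*l23 - l13*l21); l11*l22 - l12*l21; -z2];
   [:: a12*a23 - a13*a22; -(a12*l22 - a22*l12) - (a13*l23 - a23*l13) - z1; a12*l21 - a22*l11; a13*l21 - a23*l11; -p23];
   [:: -(a11*a23 - a13*a21); a11*l22 - a21*l12; -(a11*l21 - a21*l11) - (a13*l23 - a23*l13) - z1; a13*l22 - a23*l12; p13];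
   [:: a11*a22 - a12*a21; a11*l23 - a21*l13; a12*l23 - a22*l13; -(a11*l21 - a21*l11) - (a12*l22 - a22*l12) - z1; -p12]])^T.
Definition Qd3 : 'M[P]_(6,2) := mxs 6 2
  [:: [:: a11*l11 + a12*l12 + a13*l13; a11*l21 + a12*l22 + a13*l23 + z1];
   [:: a21*l11 + a22*l12 + a23*l13 - z1; a21*l21 + a22*l22 + a23*l23];
   [:: -a11*p23 + a12*p13 - a13*p12; -a21*p23 + a22*p13 - a23*p12];
   [:: -l12*p12 - l13*p13 + z2*a11; -l22*p12 - l23*p13 + z2*a21];
   [:: l11*p12 - l13*p23 + z2*a12; l21*p12 - l23*p23 + z2*a22];
   [:: l11*p13 + l12*p23 + z2*a13; l21*p13 + l22*p23 + z2*a23]].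

(* D(ij,kl) = x_ij y_kl - x_kl y_ij, written Dm x_ij y_ij x_kl y_kl *)
Definition Dm (xi yi xk yk : P) : P := xi * yk - xk * yi.
Definition ma : P := x12*x34 - x13*x24 + x14*x23.
Definition mb : P := x12*y34 - x13*y24 + x14*y23 + y12*x34 - y13*x24 + y14*x23.
Definition mc : P := y12*y34 - y13*y24 + y14*y23.
Definition mu : P := mb*mb - 4*ma*mc.
Definition u123 : P := -2*z234*(Dm x12 y12 x13 y13) + 2*z134*(Dm x12 y12 x23 y23) - 2*z124*(Dm x13 y13 x23 y23) + z123*((Dm x13 y13 x24 y24) - (Dm x12 y12 x34 y34) + (Dm x14 y14 x23 y23)).
Definition u124 : P := 2*z234*(Dm x12 y12 x14 y14) - 2*z134*(Dm x12 y12 x24 y24) + z124*((Dm x12 y12 x34 y34) + (Dm x13 y13 x24 y24) + (Dm x14 y14 x23 y23)) - 2*z123*(Dm x14 y14 x24 y24).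
Definition u134 : P := 2*z234*(Dm x13 y13 x14 y14) + z134*(-(Dm x12 y12 x34 y34) - (Dm x13 y13 x24 y24) + (Dm x14 y14 x23 y23)) + 2*z124*(Dm x13 y13 x34 y34) - 2*z123*(Dm x14 y14 x34 y34).
Definition u234 : P := z234*(-(Dm x12 y12 x34 y34) + (Dm x13 y13 x24 y24) - (Dm x14 y14 x23 y23)) - 2*z134*(Dm x23 y23 x24 y24) + 2*z124*(Dm x23 y23 x34 y34) - 2*z123*(Dm x24 y24 x34 y34).

Definition Md1 : 'M[P]_(1,5) := mxs 1 5
  [:: [:: -u234 + t*z234; -u134 + t*z134; -u124 + t*z124; -u123 - t*z123; -mu + t*t]].
(* m2 given by its columns *)
Definition Md2 : 'M[P]_(5,6) := (mxs 6 5
  [:: [:: -y12*z134 + y13*z124 - y14*z123; y12*z234 - y23*z124 + y24*z123; -y13*z234 + y23*z134 - y34*z123; -y14*z234 + y24*z134 - y34*z124; 0];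
   [:: -x12*z134 + x13*z124 - x14*z123; x12*z234 - x23*z124 + x24*z123; -x13*z234 + x23*z134 - x34*z123; -x14*z234 + x24*z134 - x34*z124; 0];
   [:: -x12*y34 + x34*y12 + x13*y24 - x24*y13 - x14*y23 + x23*y14 + t; -2*(x23*y24 - x24*y23); 2*(x23*y34 - x34*y23); 2*(x24*y34 - x34*y24); -z234];
   [:: 2*(x13*y14 - x14*y13); -x12*y34 + x34*y12 - x13*y24 + x24*y13 + x14*y23 - x23*y14 + t; 2*(x13*y34 - x34*y13); 2*(x14*y34 - x34*y14); -z134];
   [:: -2*(x12*y14 - x14*y12); 2*(x12*y24 - x24*y12); -x12*y34 + x34*y12 - x13*y24 + x24*y13 - x14*y23 + x23*y14 - t; -2*(x14*y24 - x24*y14); z124];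
   [:: -2*(x12*y13 - x13*y12); 2*(x12*y23 - x23*y12); -2*(x13*y23 - x23*y13); x12*y34 - x34*y12 - x13*y24 + x24*y13 - x14*y23 + x23*y14 + t; z123]])^T.
Definition Md3 : 'M[P]_(6,2) := mxs 6 2
  [:: [:: x12*y34 - x13*y24 + x14*y23 + x34*y12 - x24*y13 + x23*y14 + t; 2*(x12*x34 - x13*x24 + x14*x23)];
   [:: -2*(y12*y34 - y13*y24 + y14*y23); -x12*y34 + x13*y24 - x14*y23 - x34*y12 + x24*y13 - x23*y14 + t];
   [:: -(-y12*z134 + y13*z124 - y14*z123); -(-x12*z134 + x13*z124 - x14*z123)];
   [:: -y12*z234 + y23*z124 - y24*z123; -x12*z234 + x23*z124 - x24*z123];
   [:: -y13*z234 + y23*z134 - y34*z123; -x13*z234 + x23*z134 - x34*z123];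
   [:: -(-y14*z234 + y24*z134 - y34*z124); -(-x14*z234 + x24*z134 - x34*z124)]].

End Complexes.

From HB Require Import structures.
From mathcomp Require Import all_boot all_algebra.
From mathcomp Require Import mpoly.
From mathcomp Require Import ring.
Set Implicit Arguments.
Unset Strict Implicit.
Unset Printing Implicit Defensive.

Import GRing.Theory.
Local Open Scope ring_scope.

(* The substitution mu sends each variable of R0[Q] to a variable of R0[M],
   up to a factor 2 or, for z1, a quadratic correction.  When 2 is a unit it
   is undone by a substitution nu in the other direction, so mu is onto.
   After applying mu, the differentials of Q and M differ by monomial
   matrices with entries in {±1, ±2}, invertible since 2 is a unit.  Both
   facts are polynomial identities in 17 parameters, so they are checked over
   an arbitrary commutative ring. *)

Ltac case_ord :=
  let k := fresh "k" in
  case=> k; repeat (case: k => [|k]; last try (move=> ?; exfalso; by [])); move=> ?.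

Ltac mx_entrywise :=
  let i := fresh "i" in let j := fresh "j" in
  apply/matrixP => i j; rewrite !mxE ?big_ord_recl ?big_ord0 ?mxE;
  move: i j; do 2 case_ord; rewrite /=.

Section CompMpoly.
Variables (R : comNzRingType) (n k : nat).

Lemma comp_mpoly_alg_hom (lq : n.-tuple {mpoly R[k]}) : is_alg_hom (comp_mpoly lq).
Proof.
split=> [p q | p q | | c];
  [exact: rmorphD | exact: rmorphM | exact: rmorph1 | exact: comp_mpolyC].
Qed.

Lemma comp_mpolyA m (lq : n.-tuple {mpoly R[k]}) (lr : k.-tuple {mpoly R[m]})
    (p : {mpoly R[n]}) :
  (p \mPo lq) \mPo lr = p \mPo [tuple tnth lq i \mPo lr | i < n].
Proof.
rewrite (comp_mpolyEX p lq) (comp_mpolyEX p) raddf_sum /=; apply: eq_bigr => m' _.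
rewrite comp_mpolyZ; congr (_ *: _); rewrite !comp_mpolyX rmorph_prod /=.
by apply: eq_bigr => i _; rewrite rmorphXn tnth_map tnth_ord_tuple.
Qed.

Lemma map_comp_mpolyX (lq : n.-tuple {mpoly R[k]}) :
  map_tuple (comp_mpoly lq) [tuple 'X_i | i < n] = lq.
Proof.
by apply: eq_from_tnth => i; rewrite tnth_map tnth_mktuple comp_mpolyXU (tnth_nth 0).
Qed.

Lemma comp_mpoly_sectionK (nu : n.-tuple {mpoly R[k]}) (lq : k.-tuple {mpoly R[n]}) :
  map_tuple (comp_mpoly lq) nu = [tuple 'X_i | i < n] ->
  cancel (comp_mpoly nu) (comp_mpoly lq).
Proof.
move=> nuK p; rewrite comp_mpolyA -[RHS]comp_mpoly_id; congr (p \mPo _).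
by apply: eq_from_tnth => i; rewrite tnth_mktuple -nuK tnth_map.
Qed.

Lemma nth_mpolyX j : (j < n.+1)%N ->
  [tuple ('X_i : {mpoly R[n.+1]}) | i < n.+1]`_j = 'X_(inord j).
Proof. by move=> hj; rewrite -[in LHS](inordK hj) -tnth_nth tnth_mktuple. Qed.

Lemma mpolyC_half (v : R) : 2 * v = 1 -> 2 * v%:MP = 1 :> {mpoly R[n]}.
Proof. by move=> hv; rewrite -mpolyC_nat -mpolyCM hv mpolyC1. Qed.

End CompMpoly.

Lemma mx_invertible_scaled (R : comNzRingType) n (A B : 'M[R]_n) (c w : R) :
  c * w = 1 -> A *m B = c%:M -> B *m A = c%:M -> mx_invertible A.
Proof.
move=> cw AB BA; exists (w *: B).
by rewrite -scalemxAr -scalemxAl AB BA !scale_scalar_mx mulrC cw.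
Qed.

Section ComparisonMaps.
Variable S : comNzRingType.

Definition F1 : 'M[S]_5 := mxs 5 5
  [:: [:: 0; 1; 0; 0; 0]; [:: 0; 0; -1; 0; 0]; [:: 0; 0; 0; 1; 0];
      [:: -2; 0; 0; 0; 0]; [:: 0; 0; 0; 0; -1]].
Definition F2 : 'M[S]_6 := mxs 6 6
  [:: [:: 2; 0; 0; 0; 0; 0]; [:: 0; -2; 0; 0; 0; 0]; [:: 0; 0; 0; -1; 0; 0];
      [:: 0; 0; 0; 0; 1; 0]; [:: 0; 0; 0; 0; 0; 1]; [:: 0; 0; -2; 0; 0; 0]].
Definition F3 : 'M[S]_2 := mxs 2 2 [:: [:: 0; 2]; [:: 2; 0]].

(* G_i = 2 F_i^-1 has integer entries. *)
Definition G1 : 'M[S]_5 := mxs 5 5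
  [:: [:: 0; 0; 0; -1; 0]; [:: 2; 0; 0; 0; 0]; [:: 0; -2; 0; 0; 0];
      [:: 0; 0; 2; 0; 0]; [:: 0; 0; 0; 0; -2]].
Definition G2 : 'M[S]_6 := mxs 6 6
  [:: [:: 1; 0; 0; 0; 0; 0]; [:: 0; -1; 0; 0; 0; 0]; [:: 0; 0; 0; 0; 0; -1];
      [:: 0; 0; -2; 0; 0; 0]; [:: 0; 0; 0; 2; 0; 0]; [:: 0; 0; 0; 0; 2; 0]].
Definition G3 : 'M[S]_2 := mxs 2 2 [:: [:: 0; 1]; [:: 1; 0]].

Variables (w : S) (hw : 2 * w = 1).

Lemma F1_invertible : mx_invertible F1.
Proof. by apply: (@mx_invertible_scaled _ _ _ G1 _ _ hw); mx_entrywise; ring. Qed.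

Lemma F2_invertible : mx_invertible F2.
Proof. by apply: (@mx_invertible_scaled _ _ _ G2 _ _ hw); mx_entrywise; ring. Qed.

Lemma F3_invertible : mx_invertible F3.
Proof. by apply: (@mx_invertible_scaled _ _ _ G3 _ _ hw); mx_entrywise; ring. Qed.

End ComparisonMaps.

Section GenericQ.
Variables (S : comNzRingType) (w : S) (q : 17.-tuple S).
Local Notation a11 := q`_0. Local Notation a12 := q`_1. Local Notation a13 := q`_2.
Local Notation a21 := q`_3. Local Notation a22 := q`_4. Local Notation a23 := q`_5.
Local Notation l11 := q`_6. Local Notation l12 := q`_7. Local Notation l13 := q`_8.
Local Notation l21 := q`_9. Local Notation l22 := q`_10. Local Notation l23 := q`_11.
Local Notation p12 := q`_12. Local Notation p13 := q`_13. Local Notation p23 := q`_14.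
Local Notation z1 := q`_15. Local Notation z2 := q`_16.

Let NQ : S := (a11*l21 - a21*l11 + a12*l22 - a22*l12 + a13*l23 - a23*l13).

Definition Qd1_at : 'M[S]_(1,5) := mxs 1 5
  [:: [:: -(p23*(l12*l23 - l13*l22) + p13*(l11*l23 - l13*l21) + p12*(l11*l22 - l12*l21)) - z2*NQ - z2*z1; p23*(a11*l21 - a21*l11) - p13*(a12*l21 - a22*l11) + p12*(a13*l21 - a23*l11) - z2*(a12*a23 - a13*a22) + z1*p23; p23*(a11*l22 - a21*l12) - p13*(a12*l22 - a22*l12) + p12*(a13*l22 - a23*l12) + z2*(a11*a23 - a13*a21) - z1*p13; p23*(a11*l23 - a21*l13) - p13*(a12*l23 - a22*l13) + p12*(a13*l23 - a23*l13) - z2*(a11*a22 - a12*a21) + z1*p12; -((a11*l11 + a12*l12 + a13*l13)*(a21*l21 + a22*l22 + a23*l23) - (a11*l21 + a12*l22 + a13*l23)*(a21*l11 + a22*l12 + a23*l13)) - z1*NQ - z1*z1]].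

Definition Qd2_at : 'M[S]_(5,6) := (mxs 6 5
  [:: [:: p12*a23 - p13*a22 + p23*a21; -l22*p12 - l23*p13 + z2*a21; l21*p12 - l23*p23 + z2*a22; l21*p13 + l22*p23 + z2*a23; 0];
   [:: -p12*a13 + p13*a12 - p23*a11; p12*l12 + p13*l13 - z2*a11; -p12*l11 + p23*l13 - z2*a12; -p13*l11 - p23*l12 - z2*a13; 0];
   [:: z1; l12*l23 - l13*l22; -(l11*l23 - l13*l21); l11*l22 - l12*l21; -z2];
   [:: a12*a23 - a13*a22; -(a12*l22 - a22*l12) - (a13*l23 - a23*l13) - z1; a12*l21 - a22*l11; a13*l21 - a23*l11; -p23];
   [:: -(a11*a23 - a13*a21); a11*l22 - a21*l12; -(a11*l21 - a21*l11) - (a13*l23 - a23*l13) - z1; a13*l22 - a23*l12; p13];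
   [:: a11*a22 - a12*a21; a11*l23 - a21*l13; a12*l23 - a22*l13; -(a11*l21 - a21*l11) - (a12*l22 - a22*l12) - z1; -p12]])^T.

Definition Qd3_at : 'M[S]_(6,2) := mxs 6 2
  [:: [:: a11*l11 + a12*l12 + a13*l13; a11*l21 + a12*l22 + a13*l23 + z1];
   [:: a21*l11 + a22*l12 + a23*l13 - z1; a21*l21 + a22*l22 + a23*l23];
   [:: -a11*p23 + a12*p13 - a13*p12; -a21*p23 + a22*p13 - a23*p12];
   [:: -l12*p12 - l13*p13 + z2*a11; -l22*p12 - l23*p13 + z2*a21];
   [:: l11*p12 - l13*p23 + z2*a12; l21*p12 - l23*p23 + z2*a22];
   [:: l11*p13 + l12*p23 + z2*a13; l21*p13 + l22*p23 + z2*a23]].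


Definition nu_tuple : 17.-tuple S :=
  [tuple w * l13; - (w * l12); a11; w * l11; a12; a13;
         w * l23; - (w * l22); a21; w * l21; a22; a23;
         - (w * z2); p12; p13; p23;
         z1 + (a11 * (w * l21) + a12 * (w * l22) + a13 * (w * l23))
            - (a21 * (w * l11) + a22 * (w * l12) + a23 * (w * l13))].

End GenericQ.

Section GenericM.
Variables (S : comNzRingType) (m : 17.-tuple S).
Local Notation x12 := m`_0. Local Notation x13 := m`_1. Local Notation x14 := m`_2.
Local Notation x23 := m`_3. Local Notation x24 := m`_4. Local Notation x34 := m`_5.
Local Notation y12 := m`_6. Local Notation y13 := m`_7. Local Notation y14 := m`_8.
Local Notation y23 := m`_9. Local Notation y24 := m`_10. Local Notation y34 := m`_11.
Local Notation z123 := m`_12. Local Notation z124 := m`_13. Local Notation z134 := m`_14.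
Local Notation z234 := m`_15. Local Notation t := m`_16.

Let Dm (xi yi xk yk : S) : S := xi * yk - xk * yi.
Let ma : S := x12*x34 - x13*x24 + x14*x23.
Let mb : S := x12*y34 - x13*y24 + x14*y23 + y12*x34 - y13*x24 + y14*x23.
Let mc : S := y12*y34 - y13*y24 + y14*y23.
Let mu : S := mb*mb - 4*ma*mc.
Let u123 : S := -2*z234*(Dm x12 y12 x13 y13) + 2*z134*(Dm x12 y12 x23 y23) - 2*z124*(Dm x13 y13 x23 y23) + z123*((Dm x13 y13 x24 y24) - (Dm x12 y12 x34 y34) + (Dm x14 y14 x23 y23)).
Let u124 : S := 2*z234*(Dm x12 y12 x14 y14) - 2*z134*(Dm x12 y12 x24 y24) + z124*((Dm x12 y12 x34 y34) + (Dm x13 y13 x24 y24) + (Dm x14 y14 x23 y23)) - 2*z123*(Dm x14 y14 x24 y24).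
Let u134 : S := 2*z234*(Dm x13 y13 x14 y14) + z134*(-(Dm x12 y12 x34 y34) - (Dm x13 y13 x24 y24) + (Dm x14 y14 x23 y23)) + 2*z124*(Dm x13 y13 x34 y34) - 2*z123*(Dm x14 y14 x34 y34).
Let u234 : S := z234*(-(Dm x12 y12 x34 y34) + (Dm x13 y13 x24 y24) - (Dm x14 y14 x23 y23)) - 2*z134*(Dm x23 y23 x24 y24) + 2*z124*(Dm x23 y23 x34 y34) - 2*z123*(Dm x24 y24 x34 y34).

Definition Md1_at : 'M[S]_(1,5) := mxs 1 5
  [:: [:: -u234 + t*z234; -u134 + t*z134; -u124 + t*z124; -u123 - t*z123; -mu + t*t]].

Definition Md2_at : 'M[S]_(5,6) := (mxs 6 5
  [:: [:: -y12*z134 + y13*z124 - y14*z123; y12*z234 - y23*z124 + y24*z123; -y13*z234 + y23*z134 - y34*z123; -y14*z234 + y24*z134 - y34*z124; 0];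
   [:: -x12*z134 + x13*z124 - x14*z123; x12*z234 - x23*z124 + x24*z123; -x13*z234 + x23*z134 - x34*z123; -x14*z234 + x24*z134 - x34*z124; 0];
   [:: -x12*y34 + x34*y12 + x13*y24 - x24*y13 - x14*y23 + x23*y14 + t; -2*(x23*y24 - x24*y23); 2*(x23*y34 - x34*y23); 2*(x24*y34 - x34*y24); -z234];
   [:: 2*(x13*y14 - x14*y13); -x12*y34 + x34*y12 - x13*y24 + x24*y13 + x14*y23 - x23*y14 + t; 2*(x13*y34 - x34*y13); 2*(x14*y34 - x34*y14); -z134];
   [:: -2*(x12*y14 - x14*y12); 2*(x12*y24 - x24*y12); -x12*y34 + x34*y12 - x13*y24 + x24*y13 - x14*y23 + x23*y14 - t; -2*(x14*y24 - x24*y14); z124];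
   [:: -2*(x12*y13 - x13*y12); 2*(x12*y23 - x23*y12); -2*(x13*y23 - x23*y13); x12*y34 - x34*y12 - x13*y24 + x24*y13 - x14*y23 + x23*y14 + t; z123]])^T.

Definition Md3_at : 'M[S]_(6,2) := mxs 6 2
  [:: [:: x12*y34 - x13*y24 + x14*y23 + x34*y12 - x24*y13 + x23*y14 + t; 2*(x12*x34 - x13*x24 + x14*x23)];
   [:: -2*(y12*y34 - y13*y24 + y14*y23); -x12*y34 + x13*y24 - x14*y23 - x34*y12 + x24*y13 - x23*y14 + t];
   [:: -(-y12*z134 + y13*z124 - y14*z123); -(-x12*z134 + x13*z124 - x14*z123)];
   [:: -y12*z234 + y23*z124 - y24*z123; -x12*z234 + x23*z124 - x24*z123];
   [:: -y13*z234 + y23*z134 - y34*z123; -x13*z234 + x23*z134 - x34*z123];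
   [:: -(-y14*z234 + y24*z134 - y34*z124); -(-x14*z234 + x24*z134 - x34*z124)]].

Definition mu_tuple : 17.-tuple S :=
  [tuple x14; x24; x34; y14; y24; y34;
         2 * x23; 2 * - x13; 2 * x12; 2 * y23; 2 * - y13; 2 * y12;
         z124; z134; z234;
         t - (x14 * y23 - x24 * y13 + x34 * y12) + (y14 * x23 - y24 * x13 + y34 * x12);
         2 * - z123].

Lemma Qd1_at_mu : Qd1_at mu_tuple = Md1_at *m F1 S.
Proof. by mx_entrywise; rewrite /u234 /u134 /u124 /u123 /mu /ma /mb /mc /Dm; ring. Qed.

Lemma Qd2_at_mu : F1 S *m Qd2_at mu_tuple = Md2_at *m F2 S.
Proof. by mx_entrywise; ring. Qed.

Lemma Qd3_at_mu : F2 S *m Qd3_at mu_tuple = Md3_at *m F3 S.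
Proof. by mx_entrywise; ring. Qed.

Lemma nu_tupleK w : 2 * w = 1 -> nu_tuple w mu_tuple = m.
Proof.
move=> hw; have halfK (p : S) : w * (2 * p) = p by rewrite mulrA (mulrC w) hw mul1r.
apply: eq_from_tnth; case_ord; rewrite !(tnth_nth 0) /= ?halfK; ring.
Qed.

End GenericM.

Section MapGeneric.
Variables (S T : comNzRingType) (f : {rmorphism S -> T}) (q : 17.-tuple S).

Let nth_map_tuple k : (k < 17)%N -> (map_tuple f q)`_k = f q`_k.
Proof. by move=> hk; rewrite (nth_map 0) ?size_tuple. Qed.

Lemma map_Qd1_at : map_mx f (Qd1_at q) = Qd1_at (map_tuple f q).
Proof. by mx_entrywise; rewrite ?nth_map_tuple //; ring. Qed.

Lemma map_Qd2_at : map_mx f (Qd2_at q) = Qd2_at (map_tuple f q).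
Proof. by mx_entrywise; rewrite ?nth_map_tuple //; ring. Qed.

Lemma map_Qd3_at : map_mx f (Qd3_at q) = Qd3_at (map_tuple f q).
Proof. by mx_entrywise; rewrite ?nth_map_tuple //; ring. Qed.

Lemma map_nu_tuple w : map_tuple f (nu_tuple w q) = nu_tuple (f w) (map_tuple f q).
Proof.
apply: eq_from_tnth; case_ord; rewrite tnth_map !(tnth_nth 0) /= !nth_map_tuple //; ring.
Qed.

End MapGeneric.

Section Substitution.
Variable R : comNzRingType.
Local Notation P := {mpoly R[17]}.
Local Notation X17 := [tuple ('X_i : P) | i < 17].

Lemma Qd1_atX : Qd1_at X17 = Qd1 R. Proof. by rewrite /Qd1_at !nth_mpolyX. Qed.
Lemma Qd2_atX : Qd2_at X17 = Qd2 R. Proof. by rewrite /Qd2_at !nth_mpolyX. Qed.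
Lemma Qd3_atX : Qd3_at X17 = Qd3 R. Proof. by rewrite /Qd3_at !nth_mpolyX. Qed.
Lemma Md1_atX : Md1_at X17 = Md1 R. Proof. by rewrite /Md1_at !nth_mpolyX. Qed.
Lemma Md2_atX : Md2_at X17 = Md2 R. Proof. by rewrite /Md2_at !nth_mpolyX. Qed.
Lemma Md3_atX : Md3_at X17 = Md3 R. Proof. by rewrite /Md3_at !nth_mpolyX. Qed.

Definition mu_hom : {rmorphism P -> P} := comp_mpoly (mu_tuple X17).

Lemma map_mu_X : map_tuple mu_hom X17 = mu_tuple X17.
Proof. exact: map_comp_mpolyX. Qed.

Lemma comp_nu_tupleK (v : R) :
  2 * v = 1 -> cancel (comp_mpoly (nu_tuple v%:MP X17)) mu_hom.
Proof.
move=> hv; apply: comp_mpoly_sectionK.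
by rewrite (map_nu_tuple mu_hom) map_mu_X [mu_hom _]comp_mpolyC nu_tupleK // mpolyC_half.
Qed.

Lemma map_mu_Qd1 : map_mx mu_hom (Qd1 R) = Md1 R *m F1 P.
Proof. by rewrite -Qd1_atX map_Qd1_at map_mu_X Qd1_at_mu Md1_atX. Qed.

Lemma map_mu_Qd2 : F1 P *m map_mx mu_hom (Qd2 R) = Md2 R *m F2 P.
Proof. by rewrite -Qd2_atX map_Qd2_at map_mu_X Qd2_at_mu Md2_atX. Qed.

Lemma map_mu_Qd3 : F2 P *m map_mx mu_hom (Qd3 R) = Md3 R *m F3 P.
Proof. by rewrite -Qd3_atX map_Qd3_at map_mu_X Qd3_at_mu Md3_atX. Qed.

End Substitution.

Theorem theorem4p5 (R0 : comNzRingType) (hnoeth : noetherian R0)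
    (h2 : exists v : R0, 2 * v = 1) :
  exists mu : {mpoly R0[17]} -> {mpoly R0[17]},
    [/\ is_alg_hom mu,
        (forall p : {mpoly R0[17]}, exists q, mu q = p) &
        cx_iso (map_mx mu (Qd1 R0)) (map_mx mu (Qd2 R0)) (map_mx mu (Qd3 R0))
               (Md1 R0) (Md2 R0) (Md3 R0)].
Proof.
case: h2 => v hv; have hvX := mpolyC_half 17 hv.
exists (mu_hom R0); split.
- exact: comp_mpoly_alg_hom.
- move=> p; exists (comp_mpoly (nu_tuple v%:MP [tuple 'X_i | i < 17]) p).
  exact: comp_nu_tupleK.
- exists 1%:M, (F1 _), (F2 _), (F3 _); split.
  + by exists 1%:M; rewrite mulmx1.
  + exact: F1_invertible hvX.
  + exact: F2_invertible hvX.
  + exact: F3_invertible hvX.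
  + by split; rewrite ?mul1mx (map_mu_Qd1, map_mu_Qd2, map_mu_Qd3).
Qed.
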